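(* Let $\ell\ge 3$ and $d\ge 1$ be integers. For every integer $t$ with $1\le t\le \ell-2$, the number of vertices of the $t$-iterated line digraph $L^t(CK(d,\ell))$ is $$(d^2-d+1)^t d^{\ell-t}+\frac{1}{2}(-1)^{\ell+1}(d-2)^t(d-1)d+\frac{1}{2}(-1)^{\ell} d^{t+1}(d+1).$$
   Context: Let $\Sigma=\{0,1,\dots,d\}$. The cyclic Kautz digraph $CK(d,\ell)$ has as vertices all sequences $a_1\ldots a_\ell\in\Sigma^\ell$ with $a_i\neq a_{i+1}$ for $1\le i\le \ell-1$ and $a_1\neq a_\ell$, with an arc from $a_1\ldots a_\ell$ to $b_1\ldots b_\ell$ iff both are vertices and $b_i=a_{i+1}$ for $1\le i\le\ell-1$. The line digraph $L(G)$ of a digraph $G$ has as vertices the arcs of $G$, with an arc from $(u,v)$ to $(v',w)$ iff $v'=v$. $L^0(G)=G$ and $L^t(G)=L(L^{t-1}(G))$. *)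

From mathcomp Require Import all_boot all_order all_algebra.
Set Implicit Arguments. Unset Strict Implicit. Unset Printing Implicit Defensive.

Record digraph := Digraph { vtx : finType; arc : rel vtx }.

Definition line_digraph (G : digraph) : digraph :=
  @Digraph {p : vtx G * vtx G | @arc G p.1 p.2}
           (fun x y => (val x).2 == (val y).1).

Definition iter_line (t : nat) (G : digraph) : digraph := iter t line_digraph G.

(* Alphabet Sigma = {0,...,d} is 'I_d.+1.  A sequence a_1...a_l is a vertex of
   CK(d,l) iff a_i <> a_(i+1) for 1 <= i <= l-1 and a_1 <> a_l
   (0-based indices below). *)
Definition ck_vertex (d l : nat) (s : l.-tuple 'I_d.+1) : bool :=
  [forall i : 'I_l, (i.+1 < l) ==> (nth ord0 s i != nth ord0 s i.+1)]
  && (nth ord0 s 0 != nth ord0 s l.-1).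

Definition ck_vtx (d l : nat) : finType := {s : l.-tuple 'I_d.+1 | ck_vertex s}.

Definition ck_arc (d l : nat) : rel (ck_vtx d l) :=
  fun a b => [forall i : 'I_l, (i.+1 < l) ==> (nth ord0 (val b) i == nth ord0 (val a) i.+1)].

Definition CK (d l : nat) : digraph := @Digraph (ck_vtx d l) (@ck_arc d l).

From Pilot Require Import Defs.
From mathcomp Require Import all_boot all_order all_algebra.
From mathcomp Require Import zify ring.
Import GRing.Theory Num.Theory.

(* The vertices of L^t(G) are the walks of length t in G, so we count walks in
   CK(d,l).  Appending letters y_1 ... y_t (t <= l - 2) to a vertex a_1 ... a_l
   gives a walk iff each y_i differs from y_(i-1) (with y_0 = a_l) and from
   a_(i+1), the letter that becomes the first one.  Cutting a_1 ... a_l into the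
   prefix a_1 ... a_(t+1) and a walk of length l - 1 - t in the complete digraph
   on d + 1 letters, the count becomes a t-fold transfer operator on pairs
   (last appended letter, current first letter).  That operator preserves the
   functions K0 + K1 [x = c] + K2 [e = c], on which its eigenvalues are
   d^2 - d + 1, 2 - d and -d. *)

Fixpoint walks_from (G : digraph) (s : nat) (v : vtx G) : nat :=
  if s is s'.+1 then \sum_(w | Defs.arc v w) walks_from G s' w else 1.
Arguments walks_from {G}.

Definition nwalks (G : digraph) (s : nat) : nat := \sum_(v : vtx G) walks_from s v.

Lemma sum_line_vtx (G : digraph) (F : vtx G -> vtx G -> nat) :
  \sum_(q : vtx (line_digraph G)) F (val q).1 (val q).2 = \sum_a \sum_(b | Defs.arc a b) F a b.
Proof.
by rewrite pair_big_dep (big_sub (fun q : vtx G * vtx G => Defs.arc q.1 q.2) (fun q => F q.1 q.2)).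
Qed.

Lemma walks_from_line (G : digraph) s (p : vtx (line_digraph G)) :
  walks_from s p = walks_from s (val p).2.
Proof.
elim: s p => [//|s IH] p /=; under eq_bigr do rewrite IH.
rewrite big_mkcond (sum_line_vtx _ (fun a b => if (val p).2 == a then walks_from s b else 0)).
rewrite (bigD1 (val p).2) //= eqxx [X in _ + X]big1 => [|a /negbTE na].
  by rewrite addn0; apply: eq_bigr.
by rewrite big1 // eq_sym na.
Qed.

Lemma nwalks_line (G : digraph) s : nwalks (line_digraph G) s = nwalks G s.+1.
Proof.
rewrite /nwalks; under eq_bigr do rewrite walks_from_line.
exact: (sum_line_vtx _ (fun _ b => walks_from s b)).
Qed.

Lemma nwalks_iter_line (G : digraph) t s : nwalks (iter_line t G) s = nwalks G (s + t).
Proof.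
elim: t s => [|t IH] s; first by rewrite addn0.
by rewrite /iter_line iterS nwalks_line -/(iter_line t G) IH addSnnS.
Qed.

Lemma card_iter_line (G : digraph) t : #|vtx (iter_line t G)| = nwalks G t.
Proof. by rewrite -[t]add0n -nwalks_iter_line /nwalks sum1_card. Qed.

Local Open Scope ring_scope.

Section IndicatorSums.
Context {T : finType} {R : ringType}.
Implicit Types (F : T -> R) (x : T).

Lemma sum_eq_indicator F x : \sum_y (y == x)%:R * F y = F x.
Proof.
rewrite (bigD1 x) //= eqxx mul1r big1 ?addr0 // => y /negbTE ->; exact: mul0r.
Qed.

Lemma sum_neq_indicator F x : \sum_y (y != x)%:R * F y = \sum_y F y - F x.
Proof.
rewrite (bigD1 x) //= [in RHS](bigD1 x) //= eqxx mul0r add0r addrAC subrr add0r.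
by apply: eq_bigr => y ->; rewrite mul1r.
Qed.

Lemma sum_tuple_indicator n (H : seq T -> R) (r : seq T) : size r = n ->
  \sum_(u : n.-tuple T) (tval u == r)%:R * H u = H r.
Proof.
move=> /eqP sr; rewrite (bigD1 (Tuple sr)) //= eqxx mul1r big1 ?addr0 // => u nu.
suff /negbTE -> : tval u != r by rewrite mul0r.
by apply: contra nu => /eqP ur; apply/eqP/val_inj.
Qed.

Lemma sum_tuple_rcons n x0 (q : seq T) (P : pred T) (H : seq T -> R) : (size q).+1 = n ->
  \sum_(u : n.-tuple T) ((tval u == rcons q (last x0 u)) && P (last x0 u))%:R * H u
  = \sum_y (P y)%:R * H (rcons q y).
Proof.
move=> sq; transitivity (\sum_y \sum_(u : n.-tuple T) (tval u == rcons q y)%:R * ((P y)%:R * H u)).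
  rewrite exchange_big; apply: eq_bigr => u _ /=.
  rewrite -mulnb natrM -mulrA.
  rewrite -(sum_eq_indicator (fun y => (tval u == rcons q y)%:R * ((P y)%:R * H u)) (last x0 u)).
  apply: eq_bigr => y _.
  have [->|ny] := eqVneq y (last x0 u); first by rewrite mul1r.
  suff /negbTE -> : tval u != rcons q y by rewrite !mul0r.
  by apply: contra ny => /eqP ->; rewrite last_rcons.
by apply: eq_bigr => y _; rewrite (sum_tuple_indicator _ (fun s => (P y)%:R * H s)) // size_rcons.
Qed.

End IndicatorSums.

Section TupleSums.
Variables (R : Type) (idx : R) (op : Monoid.com_law idx) (T : finType).

Lemma big_tuple0 (F : 0.-tuple T -> R) : \big[op/idx]_(s : 0.-tuple T) F s = F [tuple].
Proof.
rewrite (eq_bigr (fun _ => F [tuple])) => [|s _]; last by rewrite (tuple0 s).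
by rewrite big_const card_tuple /= Monoid.mulm1.
Qed.

Lemma big_tuple_cons m (F : m.+1.-tuple T -> R) :
  \big[op/idx]_(s : m.+1.-tuple T) F s
  = \big[op/idx]_x \big[op/idx]_(s : m.-tuple T) F [tuple of x :: s].
Proof.
rewrite pair_big /= (reindex (fun p : T * m.-tuple T => [tuple of p.1 :: p.2])) //=.
exists (fun s => (thead s, [tuple of behead s])) => [[x s] _ | s _] /=.
  by congr pair; apply: val_inj.
by rewrite -tuple_eta.
Qed.

End TupleSums.

Lemma head_takeS (T : Type) (x0 : T) r (s : seq T) : head x0 (take r.+1 s) = head x0 s.
Proof. by case: s. Qed.

Lemma behead_takeS (T : Type) r (s : seq T) : behead (take r.+1 s) = take r (behead s).
Proof. by case: s. Qed.

Section CyclicKautz.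
Variable d : nat.
Local Notation A := 'I_d.+1.
Local Notation dd := (d%:R : rat).

Lemma sum_letters_const (c : rat) : \sum_(y : A) c = d.+1%:R * c.
Proof. by rewrite sumr_const card_ord mulr_natl. Qed.

Lemma sum_neq1 (a : A) : \sum_z (z != a)%:R = dd.
Proof.
under eq_bigr do rewrite -[_%:R]mulr1.
by rewrite sum_neq_indicator sum_letters_const -natr1; ring.
Qed.

Lemma sum_neq2 (a b : A) : \sum_z (z != a)%:R * (z != b)%:R = dd - (a != b)%:R.
Proof. by rewrite sum_neq_indicator sum_neq1. Qed.

Definition kautz (s : seq A) : bool := sorted (fun a b : A => a != b) s.
Arguments kautz : simpl never.

Lemma kautz_cons m x (s : m.+1.-tuple A) : kautz (x :: s) = (x != head ord0 s) && kautz s.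
Proof. by case: s => -[]. Qed.

Lemma last_cons_tuple m (x y : A) (s : m.+1.-tuple A) : last x s = last y s.
Proof. by case: s => -[]. Qed.

Fixpoint kwalks (j : nat) (x z : A) : rat :=
  if j is j'.+1 then \sum_y (y != x)%:R * kwalks j' y z else (x == z)%:R.

Definition alpha j : rat := (dd ^+ j - (-1) ^+ j) / (dd + 1).

Lemma dd1_neq0 : dd + 1 != 0.
Proof. by rewrite natr1 pnatr_eq0. Qed.

Lemma kwalksE j x z : kwalks j x z = alpha j + (-1) ^+ j * (x == z)%:R.
Proof.
elim: j x => [|j IH] x /=; first by rewrite /alpha !expr0 subrr mul0r add0r mul1r.
under eq_bigr do rewrite IH.
rewrite sum_neq_indicator big_split /= sum_letters_const.
under eq_bigr do rewrite mulrC; rewrite sum_eq_indicator.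
rewrite /alpha !exprS -natr1; field; exact: dd1_neq0.
Qed.

Lemma sum_kautz_ends j (G : A -> A -> rat) :
  \sum_(w : j.+1.-tuple A) (kautz w)%:R * G (head ord0 w) (last ord0 w)
  = \sum_x \sum_z kwalks j x z * G x z.
Proof.
elim: j G => [|j IH] G; rewrite big_tuple_cons; apply: eq_bigr => x _.
  by rewrite big_tuple0 /= mul1r; under eq_bigr do rewrite eq_sym; rewrite sum_eq_indicator.
transitivity (\sum_(w : j.+1.-tuple A) (kautz w)%:R * ((x != head ord0 w)%:R * G x (last ord0 w))).
  apply: eq_bigr => w _.
  by rewrite kautz_cons -mulnb natrM /= (last_cons_tuple _ _ ord0); ring.
rewrite (IH (fun y z => (x != y)%:R * G x z)) exchange_big; apply: eq_bigr => z _ /=.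
rewrite big_distrl; apply: eq_bigr => y _ /=.
by rewrite eq_sym; ring.
Qed.

Lemma sum_kautz_split r j (G : seq A -> A -> rat) :
  \sum_(w : (r + j).+1.-tuple A) (kautz w)%:R * G (take r.+1 w) (last ord0 w)
  = \sum_(p : r.+1.-tuple A) \sum_z (kautz p)%:R * kwalks j (last ord0 p) z * G p z.
Proof.
elim: r G => [|r IH] G.
  transitivity (\sum_x \sum_z kwalks j x z * G [:: x] z).
    rewrite -(sum_kautz_ends j (fun x z => G [:: x] z)); apply: eq_bigr => w _.
    by case: w => -[|a s] //= _; rewrite take0.
  rewrite big_tuple_cons; apply: eq_bigr => x _.
  by rewrite big_tuple0; apply: eq_bigr => z _; rewrite mul1r.
rewrite !big_tuple_cons; apply: eq_bigr => x _.
transitivity (\sum_(w : (r + j).+1.-tuple A)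
   (kautz w)%:R * ((x != head ord0 (take r.+1 w))%:R * G (x :: take r.+1 w) (last ord0 w))).
  apply: eq_bigr => w _.
  by rewrite kautz_cons head_takeS -mulnb natrM /= (last_cons_tuple _ _ ord0); ring.
rewrite (IH (fun p z => (x != head ord0 p)%:R * G (x :: p) z)); apply: eq_bigr => p _.
apply: eq_bigr => z _.
by rewrite kautz_cons -mulnb natrM /= (last_cons_tuple _ _ ord0); ring.
Qed.

Fixpoint navoid (x : A) (zs : seq A) : rat :=
  if zs is z :: zs' then \sum_y (y != x)%:R * (y != z)%:R * navoid y zs' else 1.

(* [x] is the last letter of the walk and [e] the current first letter. *)
Definition ladder (f : A -> A -> rat) (x e : A) : rat :=
  \sum_y \sum_e' (y != x)%:R * (e' != e)%:R * (y != e')%:R * f y e'.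

Lemma navoid_tuple m x (p : m.+1.-tuple A) :
  navoid x p = \sum_y (y != x)%:R * (y != head ord0 p)%:R * navoid y (behead p).
Proof. by case: p => -[]. Qed.

Lemma sum_kautz_navoid t (h : A -> rat) x e :
  \sum_(p : t.+1.-tuple A)
     (head ord0 p == e)%:R * (kautz p)%:R * h (last ord0 p) * navoid x (behead p)
  = iter t ladder (fun _ e => h e) x e.
Proof.
elim: t x e => [|t IH] x e.
  rewrite big_tuple_cons /= -(sum_eq_indicator h e); apply: eq_bigr => y _.
  by rewrite big_tuple0 /= !mulr1.
rewrite iterS /ladder; under [RHS]eq_bigr do under eq_bigr do rewrite -IH big_distrr /=.
transitivity (\sum_(p : t.+1.-tuple A) \sum_y \sum_e' (e' == head ord0 p)%:R *
   ((y != x)%:R * (e' != e)%:R * (y != e')%:R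
    * ((kautz p)%:R * h (last ord0 p) * navoid y (behead p)))).
  rewrite big_tuple_cons exchange_big; apply: eq_bigr => p _ /=.
  under eq_bigr do rewrite -!mulrA.
  under [RHS]eq_bigr do rewrite sum_eq_indicator.
  rewrite sum_eq_indicator kautz_cons (last_cons_tuple _ _ ord0) navoid_tuple !big_distrr.
  by apply: eq_bigr => y _; rewrite -mulnb natrM /= [e == _]eq_sym; ring.
rewrite exchange_big; apply: eq_bigr => y _ /=; rewrite exchange_big; apply: eq_bigr => e' _ /=.
by apply: eq_bigr => p _; rewrite [head _ _ == _]eq_sym; ring.
Qed.

Lemma eq_ladder (f g : A -> A -> rat) x e :
  (forall y e', y != e' -> f y e' = g y e') -> ladder f x e = ladder g x e.
Proof.
move=> fg; apply: eq_bigr => y _; apply: eq_bigr => e' _.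
have [->|ye] := eqVneq y e'; first by rewrite /= mulr0n mulr0 !mul0r.
by rewrite fg.
Qed.

Lemma ladder_const x e : ladder (fun _ _ => 1) x e = dd ^+ 2 - dd + (x != e)%:R.
Proof.
transitivity (\sum_y (y != x)%:R * (dd - (e != y)%:R)).
  apply: eq_bigr => y _; rewrite -sum_neq2 big_distrr; apply: eq_bigr => e' _ /=.
  by rewrite [e' == y]eq_sym; ring.
rewrite sum_neq_indicator sumrB sum_letters_const.
under eq_bigr do rewrite eq_sym.
by rewrite sum_neq1 -natr1 [e == x]eq_sym; ring.
Qed.

Lemma ladder_ind_last c x e :
  ladder (fun y _ => (y == c)%:R) x e = (c != x)%:R * (dd - (e != c)%:R).
Proof.
rewrite -[RHS](sum_eq_indicator (fun y => (y != x)%:R * (dd - (e != y)%:R))).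
apply: eq_bigr => y _; rewrite -sum_neq2 !big_distrr; apply: eq_bigr => e' _ /=.
by rewrite [e' == y]eq_sym; ring.
Qed.

Lemma ladder_ind_first c x e :
  ladder (fun _ e' => (e' == c)%:R) x e = (c != e)%:R * (dd - (x != c)%:R).
Proof.
rewrite -[RHS](sum_eq_indicator (fun e' => (e' != e)%:R * (dd - (x != e')%:R))).
rewrite /ladder exchange_big.
apply: eq_bigr => e' _; rewrite -sum_neq2 !big_distrr; apply: eq_bigr => y _ /=; ring.
Qed.

Lemma ladder_class (K0 K1 K2 : rat) c x e :
  ladder (fun y e' => K0 + K1 * (y == c)%:R + K2 * (e' == c)%:R) x e
  = K0 * (dd ^+ 2 - dd + (x != e)%:R) + K1 * ((c != x)%:R * (dd - (e != c)%:R))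
    + K2 * ((c != e)%:R * (dd - (x != c)%:R)).
Proof.
rewrite -ladder_const -ladder_ind_last -ladder_ind_first /ladder !big_distrr -!big_split.
apply: eq_bigr => y _; rewrite !big_distrr -!big_split; apply: eq_bigr => e' _ /=; ring.
Qed.

Definition lam : rat := dd ^+ 2 - dd + 1.

(* Solutions of the linear recurrence that [ladder] induces on the three
   coefficients of a function [K0 + K1 [x = c] + K2 [e = c]]; the matrix of that
   recurrence has eigenvalues [lam], [2 - d] and [- d]. *)
Definition cfar t : rat := (lam ^+ t - (2 - dd) ^+ t) / (dd + 1).
Definition clast t : rat :=
  (lam ^+ t + (dd - 1) * (2 - dd) ^+ t / 2 - (dd + 1) * (- dd) ^+ t / 2) / (dd + 1).
Definition cfirst t : rat :=
  (lam ^+ t + (dd - 1) * (2 - dd) ^+ t / 2 + (dd + 1) * (- dd) ^+ t / 2) / (dd + 1).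

Lemma clastS t : clast t.+1 = lam * cfar t + dd * (cfirst t - cfar t).
Proof.
rewrite /clast /cfirst /cfar !exprS /lam; field; exact: dd1_neq0.
Qed.

Lemma cfirstS t : cfirst t.+1 = lam * cfar t + dd * (clast t - cfar t).
Proof.
rewrite /clast /cfirst /cfar !exprS /lam; field; exact: dd1_neq0.
Qed.

Lemma cfarS t :
  cfar t.+1 = lam * cfar t + (dd - 1) * (clast t - cfar t) + (dd - 1) * (cfirst t - cfar t).
Proof.
rewrite /clast /cfirst /cfar !exprS /lam; field; exact: dd1_neq0.
Qed.

Lemma iter_ladder_class t (al be : rat) c (f : A -> A -> rat) :
  (forall x e, x != e -> f x e = al + be * (e == c)%:R) ->
  forall x e, x != e -> iter t ladder f x e =
    al * lam ^+ t
    + be * (cfar t + (clast t - cfar t) * (x == c)%:R + (cfirst t - cfar t) * (e == c)%:R).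
Proof.
move=> hf; elim: t => [|t IH] x e xe.
  rewrite /= hf // /cfar /clast /cfirst !expr0 subrr !mul0r !add0r mulr1.
  by congr (_ + _ * _); field; exact: dd1_neq0.
rewrite iterS (@eq_ladder _ (fun y e' => al * lam ^+ t + be * cfar t
    + be * (clast t - cfar t) * (y == c)%:R + be * (cfirst t - cfar t) * (e' == c)%:R))
    => [|y e' ye]; last by rewrite IH //; ring.
rewrite ladder_class xe [lam ^+ t.+1]exprS; case: (eqVneq x c) => [<- | _].
  by rewrite [e == x]eq_sym (negbTE xe) /= clastS /lam; ring.
by case: (eqVneq e c) => _; rewrite /= ?cfirstS ?cfarS /lam; ring.
Qed.

Variable l : nat.

Lemma ck_vertexE (s : l.-tuple A) : (0 < l)%N ->
  ck_vertex s = kautz s && (head ord0 s != last ord0 s).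
Proof.
move=> l_gt0; rewrite /ck_vertex /kautz; congr andb.
  apply/forallP/sortedP => [H i lt|H i]; last first.
    by apply/implyP => lt; apply: H; rewrite size_tuple.
  rewrite size_tuple in lt.
  by have := H (Ordinal (ltnW lt)); rewrite /= lt.
by rewrite nth0 -(nth_last ord0) size_tuple.
Qed.

Lemma ck_arc_tupleE (v w : l.-tuple A) : (0 < l)%N ->
  [forall i : 'I_l, (i.+1 < l)%N ==> (nth ord0 w i == nth ord0 v i.+1)]
  = (take l.-1 w == behead v).
Proof.
move=> l_gt0; apply/forallP/eqP => [H|E i].
  apply: (@eq_from_nth _ ord0).
    by rewrite size_behead size_tuple size_takel // size_tuple leq_pred.
  move=> i; rewrite size_takel ?size_tuple ?leq_pred // => lt.
  rewrite nth_take // nth_behead.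
  have lt' : (i < l)%N by lia.
  by have := H (Ordinal lt'); rewrite /= (_ : (i.+1 < l)%N = true) ?implyTb; [move/eqP|lia].
apply/implyP => lt; apply/eqP; rewrite -nth_behead -E nth_take //; lia.
Qed.

Lemma ck_succ_seqE (u v : seq A) : size u = l -> size v = l -> (2 <= l)%N -> kautz v ->
  (kautz u && (head ord0 u != last ord0 u)) && (take l.-1 u == behead v) =
  (u == rcons (behead v) (last ord0 u))
  && ((last ord0 u != last ord0 v) && (last ord0 u != nth ord0 v 1)).
Proof.
move=> su sv l2; case: v sv => [|v0 [|v1 vr]] //= sv; try lia.
case/lastP: u su => [|p y] su; first by move: su => /= ?; lia.
rewrite size_rcons in su.
have hp : take l.-1 (rcons p y) = p.
  by rewrite (_ : l.-1 = size p); [rewrite -cats1 takel_cat // take_size | lia].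
rewrite hp last_rcons -rcons_cons eqseq_rcons eqxx andbT.
have [->|_] := eqVneq p (v1 :: vr); last by rewrite andbF.
rewrite /kautz /= => /andP[_ pv]; rewrite /kautz /= rcons_path pv /= andbT.
by rewrite [y == _]eq_sym [y == v1]eq_sym.
Qed.

Lemma sum_ck_succ (v : ck_vtx d l) (H : seq A -> rat) : (2 <= l)%N ->
  \sum_(w : ck_vtx d l | ck_arc v w) H (val w) =
  \sum_y (y != last ord0 (val v))%:R * (y != nth ord0 (val v) 1)%:R * H (rcons (behead (val v)) y).
Proof.
move=> l2; have kautz_v : kautz (val v) by move: (valP v); rewrite ck_vertexE; [case/andP|lia].
under [RHS]eq_bigr do rewrite -natrM mulnb.
rewrite -(sum_tuple_rcons l ord0 _
  (fun y => (y != last ord0 (val v)) && (y != nth ord0 (val v) 1)));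
  last by rewrite size_behead size_tuple; lia.
rewrite big_mkcond.
transitivity (\sum_(u : l.-tuple A | ck_vertex u) if take l.-1 u == behead (val v) then H u else 0).
  rewrite (big_sub (fun u : l.-tuple A => ck_vertex u)); apply: eq_bigr => w _.
  by rewrite /ck_arc ck_arc_tupleE //; lia.
rewrite big_mkcond; apply: eq_bigr => u _.
rewrite -ck_succ_seqE ?size_tuple // -ck_vertexE; last lia.
by case: (ck_vertex u); case: (_ == _); rewrite ?mul1r ?mul0r.
Qed.

(* For s <= l - 2 the letters shifted to the front all come from v. *)
Lemma walks_from_CK s (v : ck_vtx d l) : (2 <= l)%N -> (s <= l - 2)%N ->
  ((@walks_from (CK d l) s v)%:R : rat) = navoid (last ord0 (val v)) (take s (behead (val v))).
Proof.
move=> l2; elim: s v => [|s IH] v hs; first by rewrite take0.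
rewrite /= natr_sum.
transitivity (\sum_(w : ck_vtx d l | ck_arc v w)
   navoid (last ord0 (val w)) (take s (behead (val w)))).
  by apply: eq_bigr => w _; apply: IH; lia.
rewrite (sum_ck_succ v (fun u => navoid (last ord0 u) (take s (behead u)))) //.
case: v hs => [[[|v0 [|v1 vr]] /= sz] ck] hs /=; have /eqP sz' := sz; try lia.
apply: eq_bigr => y _; rewrite last_rcons -cats1 takel_cat //; lia.
Qed.

Lemma nwalks_CK_split t : (3 <= l)%N -> (t <= l - 2)%N ->
  ((nwalks (CK d l) t)%:R : rat) =
  \sum_z \sum_(p : t.+1.-tuple A)
     (head ord0 p != z)%:R * (kautz p)%:R * kwalks (l - 1 - t) (last ord0 p) z
     * navoid z (behead p).
Proof.
move=> l3 tl; rewrite /nwalks natr_sum.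
transitivity (\sum_(u : l.-tuple A | ck_vertex u) navoid (last ord0 u) (take t (behead u))).
  rewrite (big_sub (fun u : l.-tuple A => ck_vertex u)).
  by apply: eq_bigr => v _; apply: walks_from_CK; lia.
rewrite big_mkcond /=.
transitivity (\sum_(u : l.-tuple A) (kautz u)%:R *
   ((head ord0 (take t.+1 u) != last ord0 u)%:R * navoid (last ord0 u) (behead (take t.+1 u)))).
  apply: eq_bigr => u _; rewrite ck_vertexE ?head_takeS ?behead_takeS; last lia.
  by case: (kautz u); case: (head ord0 u != last ord0 u); rewrite /= ?mul1r ?mul0r.
have split m : m = (t + (l - 1 - t)).+1 -> \sum_(u : m.-tuple A) (kautz u)%:R *
   ((head ord0 (take t.+1 u) != last ord0 u)%:R * navoid (last ord0 u) (behead (take t.+1 u))) =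
   \sum_(p : t.+1.-tuple A) \sum_z (kautz p)%:R * kwalks (l - 1 - t) (last ord0 p) z *
     ((head ord0 p != z)%:R * navoid z (behead p)).
  move=> ->.
  exact: (sum_kautz_split _ _ (fun p z => (head ord0 p != z)%:R * navoid z (behead p))).
rewrite split; last lia.
rewrite exchange_big; apply: eq_bigr => z _; apply: eq_bigr => p _ /=; ring.
Qed.

Lemma sum_kautz_ladder j t z :
  \sum_(p : t.+1.-tuple A)
     (head ord0 p != z)%:R * (kautz p)%:R * kwalks j (last ord0 p) z * navoid z (behead p)
  = dd * (alpha j * lam ^+ t + (-1) ^+ j * clast t).
Proof.
transitivity (\sum_e (e != z)%:R * iter t ladder (fun _ e' => kwalks j e' z) z e).
  under [RHS]eq_bigr do rewrite -sum_kautz_navoid big_distrr.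
  rewrite exchange_big; apply: eq_bigr => p _ /=.
  rewrite -(sum_eq_indicator (fun e => (e != z)%:R * (kautz p)%:R * kwalks j (last ord0 p) z
     * navoid z (behead p)) (head ord0 p)).
  by apply: eq_bigr => e _; rewrite [e == _]eq_sym; ring.
transitivity (\sum_e (e != z)%:R * (alpha j * lam ^+ t + (-1) ^+ j * clast t)).
  apply: eq_bigr => e _; have [->|ez] := eqVneq e z; first by rewrite !mul0r.
  have ze : z != e by rewrite eq_sym.
  rewrite (@iter_ladder_class t (alpha j) ((-1) ^+ j) z _ _ z e ze) => [|x e' _];
    last exact: kwalksE.
  by rewrite eqxx (negbTE ez) /=; ring.
by rewrite -mulr_suml sum_neq1.
Qed.

Lemma nwalks_CK t : (3 <= l)%N -> (t <= l - 2)%N ->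
  ((nwalks (CK d l) t)%:R : rat) =
  (dd + 1) * dd * (alpha (l - 1 - t) * lam ^+ t + (-1) ^+ (l - 1 - t) * clast t).
Proof.
move=> l3 tl; rewrite nwalks_CK_split //.
under eq_bigr do rewrite sum_kautz_ladder.
by rewrite sum_letters_const -natr1 mulrA.
Qed.

Lemma walk_count_closed_form j t : (dd + 1) * dd * (alpha j * lam ^+ t + (-1) ^+ j * clast t) =
  (dd ^+ 2 - dd + 1) ^+ t * dd ^+ j.+1
    + 1 / 2 * (-1) ^+ (j + t).+2 * (dd - 2) ^+ t * (dd - 1) * dd
    + 1 / 2 * (-1) ^+ (j + t).+1 * dd ^+ t.+1 * (dd + 1).
Proof.
rewrite /alpha /clast /lam (_ : 2 - dd = - (dd - 2)); last by ring.
rewrite (exprNn (dd - 2)) (exprNn dd) !exprS (exprD (-1)).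
field; exact: dd1_neq0.
Qed.

End CyclicKautz.

Theorem theorem4 (d l t : nat) :
  (3 <= l)%N -> (1 <= d)%N -> (1 <= t)%N -> (t <= l - 2)%N ->
  (#|vtx (iter_line t (CK d l))|%:R : rat) =
    (d%:R ^+ 2 - d%:R + 1) ^+ t * d%:R ^+ (l - t)
    + 1 / 2 * (-1) ^+ l.+1 * (d%:R - 2) ^+ t * (d%:R - 1) * d%:R
    + 1 / 2 * (-1) ^+ l * d%:R ^+ t.+1 * (d%:R + 1).
Proof.
move=> l3 _ _ tl.
rewrite card_iter_line nwalks_CK // walk_count_closed_form.
have -> : (l - 1 - t + t).+1 = l by lia.
by have -> : (l - t)%N = (l - 1 - t).+1 by lia.
Qed.
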